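(* Let $(X,d)$ be a separable, zero-dimensional metric space with $d\le 1$. Then there exist a set $A\subseteq{}^\omega\omega$ and a homeomorphism $h:A\to X$ such that $d(h(x),h(y))\le d'(x,y)$ for all $x,y\in A$, where $d'$ is the usual metric on ${}^\omega\omega$. If moreover $d$ is an ultrametric, then $h$ can be chosen so that in addition $d'(h^{-1}(u),h^{-1}(v))\le 2\,d(u,v)$ for all $u,v\in X$. If $d$ is also complete, then the set $A$ can be taken to be closed in ${}^\omega\omega$.
   Context: Work in ZF plus countable choice over the reals. ${}^\omega\omega$ is the Baire space of all infinite sequences of natural numbers, with the usual ultrametric $d'(x,y)=2^{-n}$ where $n$ is least with $x(n)\ne y(n)$ (and $d'(x,x)=0$). *)

From Stdlib Require Import Reals Lra Lia ClassicalEpsilon.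
Open Scope R_scope.

Definition baire := nat -> nat.

(** The least index at which two sequences differ (meaningful when x <> y). *)
Definition first_diff (x y : baire) : nat :=
  epsilon (inhabits 0%nat)
    (fun n => x n <> y n /\ forall m, (m < n)%nat -> x m = y m).

Definition baire_dist (x y : baire) : R :=
  if excluded_middle_informative (x = y) then 0
  else / (2 ^ first_diff x y).

Definition is_metric {X : Type} (d : X -> X -> R) : Prop :=
  (forall x y, 0 <= d x y) /\
  (forall x y, d x y = 0 <-> x = y) /\
  (forall x y, d x y = d y x) /\
  (forall x y z, d x z <= d x y + d y z).

Definition is_ultrametric {X : Type} (d : X -> X -> R) : Prop :=
  forall x y z, d x z <= Rmax (d x y) (d y z).

Definition ball {X : Type} (d : X -> X -> R) (x : X) (e : R) : X -> Prop :=
  fun y => d x y < e.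

Definition is_open {X : Type} (d : X -> X -> R) (U : X -> Prop) : Prop :=
  forall x, U x -> exists e, 0 < e /\ forall y, ball d x e y -> U y.

Definition is_closed {X : Type} (d : X -> X -> R) (F : X -> Prop) : Prop :=
  is_open d (fun x => ~ F x).

Definition zero_dimensional {X : Type} (d : X -> X -> R) : Prop :=
  forall x e, 0 < e ->
    exists U : X -> Prop, is_open d U /\ is_closed d U /\ U x /\
      forall y, U y -> ball d x e y.

Definition countable_set {X : Type} (S : X -> Prop) : Prop :=
  exists f : X -> nat, forall x y, S x -> S y -> f x = f y -> x = y.

Definition separable {X : Type} (d : X -> X -> R) : Prop :=
  exists S : X -> Prop, countable_set S /\
    forall x e, 0 < e -> exists s, S s /\ d x s < e.

Definition cauchy {X : Type} (d : X -> X -> R) (u : nat -> X) : Prop :=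
  forall e, 0 < e -> exists N, forall m n, (N <= m)%nat -> (N <= n)%nat ->
    d (u m) (u n) < e.

Definition converges_to {X : Type} (d : X -> X -> R) (u : nat -> X) (l : X) : Prop :=
  forall e, 0 < e -> exists N, forall n, (N <= n)%nat -> d (u n) l < e.

Definition complete {X : Type} (d : X -> X -> R) : Prop :=
  forall u, cauchy d u -> exists l, converges_to d u l.

Definition continuous_on {X Y : Type} (dX : X -> X -> R) (dY : Y -> Y -> R)
  (D : X -> Prop) (f : X -> Y) : Prop :=
  forall x, D x -> forall e, 0 < e -> exists del, 0 < del /\
    forall y, D y -> dX x y < del -> dY (f x) (f y) < e.

(** h : A -> X (A ⊆ baire, as a subtype) is a homeomorphism onto X with
    inverse g : X -> A.  The subtype is used so that X may be empty. *)
Definition homeo_onto {X : Type} (d : X -> X -> R) (A : baire -> Prop)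
  (h : {a : baire | A a} -> X) (g : X -> {a : baire | A a}) : Prop :=
  (forall a, g (h a) = a) /\
  (forall u, h (g u) = u) /\
  continuous_on (fun a b : {a : baire | A a} => baire_dist (proj1_sig a) (proj1_sig b))
     d (fun _ => True) h /\
  continuous_on d (fun a b : {a : baire | A a} => baire_dist (proj1_sig a) (proj1_sig b))
     (fun _ => True) g.

Definition closed_in_baire (A : baire -> Prop) : Prop :=
  is_closed baire_dist A.

(** The embedding sends [x] to its itinerary [n |-> c n x], where [c n] is a
    locally constant labelling of [X] by natural numbers whose fibres have
    diameter at most [2^-(n+1)].  Agreement of itineraries up to [n] then forces
    [d x y <= 2^-n], so the inverse is 1-Lipschitz, and local constancy makes the
    itinerary continuous.  For [c n] take the index of the first set containing
    [x] in a countable clopen cover of small mesh; such covers exist because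
    clopen sets form a base and the centres and radii of the basic sets can be
    drawn from a countable dense set.  In an ultrametric space the closed balls
    of radius [2^-(n+1)] around the dense set partition [X], and labelling by
    them gives [c n x = c n y] exactly when [d x y <= 2^-(n+1)]: this yields the
    bound by [2 d], and completeness of [d] makes the range closed, since a
    sequence realising longer and longer prefixes of a point of the closure is
    Cauchy. *)

From Stdlib Require Import Reals Lra Lia Wf_nat.
From Stdlib Require Import Classical ClassicalEpsilon FunctionalExtensionality.
From Stdlib Require Import PropExtensionality ProofIrrelevance.
From Stdlib Require Cantor.
Open Scope R_scope.

Lemma inv_pow2_pos (n : nat) : 0 < / 2 ^ n.
Proof. apply Rinv_0_lt_compat, pow_lt; lra. Qed.

Lemma inv_pow2_le_compat (m n : nat) : (m <= n)%nat -> / 2 ^ n <= / 2 ^ m.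
Proof. intro Hmn. apply Rinv_le_contravar; [apply pow_lt; lra | apply Rle_pow; [lra | exact Hmn]]. Qed.

Lemma inv_pow2_S (n : nat) : / 2 ^ S n = / 2 ^ n / 2.
Proof. simpl. rewrite Rinv_mult. lra. Qed.

Lemma inv_pow2_lt_exists (e : R) : 0 < e -> exists n, / 2 ^ n < e.
Proof.
  intro He.
  destruct (pow_lt_1_zero (/ 2) ltac:(rewrite Rabs_pos_eq; lra) e He) as [N HN].
  exists N. specialize (HN N (le_n N)).
  rewrite pow_inv, Rabs_pos_eq in HN; [exact HN | left; apply inv_pow2_pos].
Qed.

Definition least (P : nat -> Prop) : nat :=
  epsilon (inhabits 0%nat) (fun n => P n /\ forall m, P m -> (n <= m)%nat).

Lemma least_spec (P : nat -> Prop) :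
  (exists n, P n) -> P (least P) /\ forall m, P m -> (least P <= m)%nat.
Proof.
  intro Hex. unfold least. apply epsilon_spec.
  destruct (dec_inh_nat_subset_has_unique_least_element P (fun n => classic (P n)) Hex)
    as [n [Hn _]].
  now exists n.
Qed.

Lemma least_eq (P : nat -> Prop) (n : nat) :
  P n -> (forall m, (m < n)%nat -> ~ P m) -> least P = n.
Proof.
  intros Hn Hbelow. destruct (least_spec P (ex_intro _ n Hn)) as [Hl Hmin].
  specialize (Hmin n Hn).
  destruct (Nat.eq_dec (least P) n) as [E | Hne]; [exact E |].
  exfalso. apply (Hbelow (least P)); [lia | exact Hl].
Qed.

(** * The Baire metric *)

Lemma first_diff_spec (a b : baire) : a <> b ->
  a (first_diff a b) <> b (first_diff a b) /\
  forall m, (m < first_diff a b)%nat -> a m = b m.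
Proof.
  intro Hab. unfold first_diff. apply epsilon_spec.
  assert (Hex : exists n, a n <> b n).
  { apply not_all_ex_not. intro Hall. apply Hab, functional_extensionality, Hall. }
  destruct (least_spec _ Hex) as [Hn Hmin].
  exists (least (fun n => a n <> b n)). split; [exact Hn |].
  intros m Hm. apply NNPP. intro Hne. specialize (Hmin m Hne). lia.
Qed.

Lemma baire_dist_refl (a : baire) : baire_dist a a = 0.
Proof. unfold baire_dist. destruct (excluded_middle_informative (a = a)); tauto. Qed.

Lemma baire_dist_neq (a b : baire) : a <> b -> baire_dist a b = / 2 ^ first_diff a b.
Proof. intro Hab. unfold baire_dist. destruct (excluded_middle_informative (a = b)); tauto. Qed.

Lemma baire_dist_nonneg (a b : baire) : 0 <= baire_dist a b.
Proof.
  destruct (classic (a = b)) as [<- | Hab].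
  - rewrite baire_dist_refl. lra.
  - rewrite baire_dist_neq by exact Hab. left. apply inv_pow2_pos.
Qed.

Lemma baire_dist_le_of_agree (a b : baire) (n : nat) :
  (forall m, (m < n)%nat -> a m = b m) -> baire_dist a b <= / 2 ^ n.
Proof.
  intro Hagree. destruct (classic (a = b)) as [<- | Hab].
  - rewrite baire_dist_refl. left. apply inv_pow2_pos.
  - rewrite baire_dist_neq by exact Hab. apply inv_pow2_le_compat.
    destruct (first_diff_spec a b Hab) as [Hdiff _].
    destruct (Nat.le_gt_cases n (first_diff a b)) as [Hle | Hlt]; [exact Hle |].
    exfalso. exact (Hdiff (Hagree _ Hlt)).
Qed.

Lemma agree_of_baire_dist_lt (a b : baire) (n : nat) :
  baire_dist a b < / 2 ^ n -> forall m, (m <= n)%nat -> a m = b m.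
Proof.
  intros Hlt m Hm. destruct (classic (a = b)) as [<- | Hab]; [reflexivity |].
  rewrite baire_dist_neq in Hlt by exact Hab.
  destruct (first_diff_spec a b Hab) as [_ Hagree]. apply Hagree.
  destruct (Nat.le_gt_cases (first_diff a b) n) as [Hle | Hgt]; [| lia].
  pose proof (inv_pow2_le_compat _ _ Hle). lra.
Qed.

Section MetricSpace.

Context {X : Type} (d : X -> X -> R).
Hypothesis Hmet : is_metric d.

Lemma dist_nonneg (x y : X) : 0 <= d x y.
Proof. apply Hmet. Qed.

Lemma dist_refl (x : X) : d x x = 0.
Proof. apply Hmet. reflexivity. Qed.

Lemma dist_sym (x y : X) : d x y = d y x.
Proof. apply Hmet. Qed.

Lemma dist_triangle (x y z : X) : d x z <= d x y + d y z.
Proof. apply Hmet. Qed.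

Lemma eq_of_dist_le_inv_pow2 (x y : X) : (forall n, d x y <= / 2 ^ n) -> x = y.
Proof.
  intro Hsmall. apply Hmet.
  destruct (dist_nonneg x y) as [Hpos | Hzero]; [| now symmetry].
  destruct (inv_pow2_lt_exists _ Hpos) as [n Hn]. specialize (Hsmall n). lra.
Qed.

Lemma near_forall_lt (P : nat -> X -> Prop) (x : X) (N : nat) :
  (forall k, (k < N)%nat -> exists r, 0 < r /\ forall y, d x y < r -> P k y) ->
  exists r, 0 < r /\ forall y, d x y < r -> forall k, (k < N)%nat -> P k y.
Proof.
  induction N as [| N IH]; intro Hnear.
  - exists 1. split; [lra |]. intros y _ k Hk. lia.
  - destruct IH as [r1 [Hr1 H1]]; [intros k Hk; apply Hnear; lia |].
    destruct (Hnear N (Nat.lt_succ_diag_r N)) as [r2 [Hr2 H2]].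
    exists (Rmin r1 r2). split; [now apply Rmin_pos |].
    intros y Hy k Hk. pose proof (Rmin_l r1 r2). pose proof (Rmin_r r1 r2).
    destruct (Nat.eq_dec k N) as [-> | Hne]; [apply H2; lra | apply H1; [lra | lia]].
Qed.

Definition clopen (U : X -> Prop) : Prop := is_open d U /\ is_closed d U.

Lemma clopen_empty : clopen (fun _ => False).
Proof.
  split; intros x Hx; [contradiction |].
  exists 1. split; [lra |]. intros y _ Hy. exact Hy.
Qed.

Definition first_index (W : nat -> X -> Prop) (x : X) : nat := least (fun k => W k x).

Lemma first_index_mem (W : nat -> X -> Prop) (x : X) :
  (exists k, W k x) -> W (first_index W x) x.
Proof. intro Hex. exact (proj1 (least_spec _ Hex)). Qed.

Lemma first_index_ext (W : nat -> X -> Prop) (x y : X) :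
  (forall k, W k x <-> W k y) -> first_index W x = first_index W y.
Proof.
  intro Hiff. unfold first_index. f_equal.
  apply functional_extensionality. intro k. apply propositional_extensionality, Hiff.
Qed.

Lemma first_index_locally_constant (W : nat -> X -> Prop) :
  (forall k, clopen (W k)) -> (forall x, exists k, W k x) ->
  forall x, exists r, 0 < r /\ forall y, d x y < r -> first_index W y = first_index W x.
Proof.
  intros Hclopen Hcover x.
  destruct (least_spec _ (Hcover x)) as [Hin Hmin].
  set (k := least (fun k => W k x)) in *.
  destruct (near_forall_lt (fun j y => ~ W j y) x k) as [r1 [Hr1 Hout]].
  { intros j Hj. destruct (proj2 (Hclopen j) x) as [r [Hr Hball]].
    - intro Hjx. specialize (Hmin j Hjx). lia.
    - exists r. split; [exact Hr | exact Hball]. }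
  destruct (proj1 (Hclopen k) x Hin) as [r2 [Hr2 Hball]].
  exists (Rmin r1 r2). split; [now apply Rmin_pos |].
  intros y Hy. pose proof (Rmin_l r1 r2). pose proof (Rmin_r r1 r2).
  apply least_eq; [apply Hball; unfold ball; lra |].
  intros j Hj. apply Hout; [lra | exact Hj].
Qed.

(** * Itineraries *)

Section Itinerary.

Hypothesis Hle1 : forall x y, d x y <= 1.

Variable code : nat -> X -> nat.
Hypothesis code_fibre_small : forall n x y, code n x = code n y -> d x y <= / 2 ^ S n.

Definition itinerary (x : X) : baire := fun n => code n x.

Definition itinerary_range (a : baire) : Prop := exists x, itinerary x = a.

Definition encode (x : X) : {a : baire | itinerary_range a} :=
  exist _ (itinerary x) (ex_intro _ x eq_refl).

Definition decode (a : {a : baire | itinerary_range a}) : X :=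
  proj1_sig (constructive_indefinite_description _ (proj2_sig a)).

Lemma itinerary_decode (a : {a : baire | itinerary_range a}) :
  itinerary (decode a) = proj1_sig a.
Proof. exact (proj2_sig (constructive_indefinite_description _ (proj2_sig a))). Qed.

Lemma dist_le_of_code_agree (x y : X) (n : nat) :
  (forall m, (m < n)%nat -> code m x = code m y) -> d x y <= / 2 ^ n.
Proof.
  destruct n as [| n]; intro Hagree.
  - rewrite pow_O, Rinv_1. apply Hle1.
  - apply code_fibre_small, Hagree. lia.
Qed.

Lemma itinerary_inj (x y : X) : itinerary x = itinerary y -> x = y.
Proof.
  intro E. apply eq_of_dist_le_inv_pow2. intro n.
  apply dist_le_of_code_agree. intros m _. exact (f_equal (fun a => a m) E).
Qed.

Lemma dist_le_baire_dist_itinerary (x y : X) :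
  d x y <= baire_dist (itinerary x) (itinerary y).
Proof.
  destruct (classic (itinerary x = itinerary y)) as [E | Hne].
  - rewrite (itinerary_inj _ _ E), dist_refl. apply baire_dist_nonneg.
  - rewrite baire_dist_neq by exact Hne.
    apply dist_le_of_code_agree, (first_diff_spec _ _ Hne).
Qed.

Hypothesis code_locally_constant :
  forall n x, exists r, 0 < r /\ forall y, d x y < r -> code n y = code n x.

Lemma itinerary_continuous (x : X) (e : R) :
  0 < e -> exists r, 0 < r /\ forall y, d x y < r -> baire_dist (itinerary x) (itinerary y) < e.
Proof.
  intro He. destruct (inv_pow2_lt_exists e He) as [N HN].
  destruct (near_forall_lt (fun m y => code m y = code m x) x N) as [r [Hr Hnear]].
  { intros m _. apply code_locally_constant. }
  exists r. split; [exact Hr |]. intros y Hy.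
  eapply Rle_lt_trans; [| exact HN].
  apply baire_dist_le_of_agree. intros m Hm. symmetry. exact (Hnear y Hy m Hm).
Qed.

Lemma itinerary_homeo : homeo_onto d itinerary_range decode encode.
Proof.
  split; [| split; [| split]].
  - intro a. apply eq_sig_hprop; [intros; apply proof_irrelevance |].
    apply itinerary_decode.
  - intro x. apply itinerary_inj. rewrite itinerary_decode. reflexivity.
  - intros a _ e He. exists e. split; [exact He |]. intros b _ Hab.
    pose proof (dist_le_baire_dist_itinerary (decode a) (decode b)) as Hle.
    rewrite !itinerary_decode in Hle. lra.
  - intros x _ e He. destruct (itinerary_continuous x e He) as [r [Hr Hnear]].
    exists r. split; [exact Hr |]. intros y _. apply Hnear.
Qed.

Lemma decode_lipschitz (a b : {a : baire | itinerary_range a}) :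
  d (decode a) (decode b) <= baire_dist (proj1_sig a) (proj1_sig b).
Proof. rewrite <- !itinerary_decode. apply dist_le_baire_dist_itinerary. Qed.

Hypothesis code_eq_of_dist_le : forall n x y, d x y <= / 2 ^ S n -> code n x = code n y.

Lemma code_locally_constant_of_dist_le (n : nat) (x : X) :
  exists r, 0 < r /\ forall y, d x y < r -> code n y = code n x.
Proof.
  exists (/ 2 ^ S n). split; [apply inv_pow2_pos |].
  intros y Hy. symmetry. apply code_eq_of_dist_le. lra.
Qed.

Lemma baire_dist_itinerary_le (x y : X) :
  baire_dist (itinerary x) (itinerary y) <= 2 * d x y.
Proof.
  destruct (classic (itinerary x = itinerary y)) as [E | Hne].
  - rewrite E, baire_dist_refl. pose proof (dist_nonneg x y). lra.
  - rewrite baire_dist_neq by exact Hne.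
    destruct (first_diff_spec _ _ Hne) as [Hdiff _].
    set (n := first_diff _ _) in *.
    assert (Hfar : ~ d x y <= / 2 ^ S n) by (intro Hle; apply Hdiff, code_eq_of_dist_le, Hle).
    rewrite inv_pow2_S in Hfar. lra.
Qed.

Lemma itinerary_range_of_approx (a : baire) : complete d ->
  (forall n, exists x, forall m, (m <= n)%nat -> code m x = a m) -> itinerary_range a.
Proof.
  intros Hcomplete Happrox. destruct (choice _ Happrox) as [u Hu].
  assert (Hcauchy : cauchy d u).
  { intros e He. destruct (inv_pow2_lt_exists e He) as [N HN]. exists N. intros m n Hm Hn.
    assert (Hclose : d (u m) (u n) <= / 2 ^ S N).
    { apply code_fibre_small. rewrite (Hu m N Hm), (Hu n N Hn). reflexivity. }
    pose proof (inv_pow2_le_compat N (S N) (Nat.le_succ_diag_r N)). lra. }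
  destruct (Hcomplete u Hcauchy) as [l Hl]. exists l.
  apply functional_extensionality. intro k.
  destruct (Hl (/ 2 ^ S k) (inv_pow2_pos _)) as [N HN].
  rewrite <- (Hu (Nat.max N k) k) by lia. symmetry.
  apply code_eq_of_dist_le. left. apply HN. lia.
Qed.

Lemma itinerary_range_closed : complete d -> closed_in_baire itinerary_range.
Proof.
  intros Hcomplete a Ha. apply NNPP. intro Hnot_interior. apply Ha.
  apply (itinerary_range_of_approx a Hcomplete). intro n.
  apply NNPP. intro Hno_approx. apply Hnot_interior.
  exists (/ 2 ^ n). split; [apply inv_pow2_pos |].
  intros b Hab [x <-]. apply Hno_approx. exists x. intros m Hm.
  symmetry. exact (agree_of_baire_dist_lt _ _ _ Hab m Hm).
Qed.

End Itinerary.

(** * Codes from a countable dense set *)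

Section DenseCodes.

Hypothesis Hzd : zero_dimensional d.
Variables (D : X -> Prop) (f : X -> nat).
Hypothesis f_inj : forall x y, D x -> D y -> f x = f y -> x = y.
Hypothesis D_dense : forall x e, 0 < e -> exists s, D s /\ d x s < e.

(** A clopen set squeezed between the balls of radii [2^-m] and [r/2] around
    the point of [D] labelled [j], where [p = (j, m)]. *)
Definition cell (r : R) (p : nat * nat) (U : X -> Prop) : Prop :=
  clopen U /\ exists s, D s /\ f s = fst p /\
    (forall y, d s y < / 2 ^ snd p -> U y) /\ (forall y, U y -> d s y < r / 2).

Definition cell_cover (r : R) (k : nat) : X -> Prop :=
  if excluded_middle_informative (exists U, cell r (Cantor.of_nat k) U)
  then epsilon (inhabits (fun _ => False)) (cell r (Cantor.of_nat k))
  else fun _ => False.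

Lemma cell_cover_cell (r : R) (k : nat) :
  (exists U, cell r (Cantor.of_nat k) U) -> cell r (Cantor.of_nat k) (cell_cover r k).
Proof.
  intro Hex. unfold cell_cover.
  destruct (excluded_middle_informative _) as [_ | Hnone]; [apply epsilon_spec, Hex | contradiction].
Qed.

Lemma cell_cover_cases (r : R) (k : nat) :
  cell r (Cantor.of_nat k) (cell_cover r k) \/ cell_cover r k = (fun _ => False).
Proof.
  destruct (classic (exists U, cell r (Cantor.of_nat k) U)) as [Hex | Hnone].
  - left. exact (cell_cover_cell r k Hex).
  - right. unfold cell_cover. destruct (excluded_middle_informative _); [contradiction | reflexivity].
Qed.

Lemma cell_cover_clopen (r : R) (k : nat) : clopen (cell_cover r k).
Proof.
  destruct (cell_cover_cases r k) as [[Hclopen _] | ->]; [exact Hclopen | apply clopen_empty].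
Qed.

Lemma cell_cover_small (r : R) (k : nat) (y z : X) :
  cell_cover r k y -> cell_cover r k z -> d y z < r.
Proof.
  destruct (cell_cover_cases r k) as [[_ [s [_ [_ [_ Hsmall]]]]] | ->]; [| contradiction].
  intros Hy Hz. pose proof (Hsmall y Hy). pose proof (Hsmall z Hz).
  pose proof (dist_triangle y s z). rewrite (dist_sym y s) in *. lra.
Qed.

Lemma cell_cover_covers (r : R) : 0 < r -> forall x, exists k, cell_cover r k x.
Proof.
  intros Hr x.
  destruct (Hzd x (r / 4)) as [U [Uopen [Uclosed [Ux Usmall]]]]; [lra |].
  destruct (Uopen x Ux) as [rho [Hrho Hball]].
  destruct (inv_pow2_lt_exists (Rmin (rho / 2) (r / 4))) as [m Hm]; [apply Rmin_pos; lra |].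
  pose proof (Rmin_l (rho / 2) (r / 4)). pose proof (Rmin_r (rho / 2) (r / 4)).
  destruct (D_dense x (/ 2 ^ m) (inv_pow2_pos m)) as [s [Ds Hxs]].
  assert (Hcell : cell r (f s, m) U).
  { split; [split; assumption |]. exists s. repeat split; [exact Ds | |].
    - intros y Hy. apply Hball. unfold ball. pose proof (dist_triangle x s y). simpl in Hy. lra.
    - intros y Hy. pose proof (Usmall y Hy) as Hxy. unfold ball in Hxy.
      pose proof (dist_triangle s x y). rewrite (dist_sym s x) in *. lra. }
  exists (Cantor.to_nat (f s, m)).
  pose proof (cell_cover_cell r (Cantor.to_nat (f s, m))) as Hchosen.
  rewrite Cantor.cancel_of_to in Hchosen.
  destruct (Hchosen (ex_intro _ U Hcell)) as [_ [s' [Ds' [Hfs' [Hinner _]]]]].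
  simpl in Hfs', Hinner. rewrite (f_inj s' s Ds' Ds Hfs') in Hinner.
  apply Hinner. rewrite dist_sym. exact Hxs.
Qed.

Definition cell_code (n : nat) : X -> nat := first_index (cell_cover (/ 2 ^ S n)).

Lemma cell_code_fibre_small (n : nat) (x y : X) :
  cell_code n x = cell_code n y -> d x y <= / 2 ^ S n.
Proof.
  intro E. left. apply (cell_cover_small _ (cell_code n x)); [| rewrite E];
    apply first_index_mem, cell_cover_covers, inv_pow2_pos.
Qed.

Lemma cell_code_locally_constant (n : nat) (x : X) :
  exists r, 0 < r /\ forall y, d x y < r -> cell_code n y = cell_code n x.
Proof.
  apply first_index_locally_constant;
    [apply cell_cover_clopen | apply cell_cover_covers, inv_pow2_pos].
Qed.

Definition closed_ball_cover (r : R) (k : nat) (y : X) : Prop :=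
  exists s, D s /\ f s = k /\ d y s <= r.

Definition ball_code (n : nat) : X -> nat := first_index (closed_ball_cover (/ 2 ^ S n)).

Lemma closed_ball_cover_covers (r : R) : 0 < r -> forall x, exists k, closed_ball_cover r k x.
Proof.
  intros Hr x. destruct (D_dense x r Hr) as [s [Ds Hxs]].
  exists (f s), s. repeat split; [exact Ds | lra].
Qed.

Hypothesis Hultra : is_ultrametric d.

Lemma ball_code_fibre_small (n : nat) (x y : X) :
  ball_code n x = ball_code n y -> d x y <= / 2 ^ S n.
Proof.
  intro E. pose proof (closed_ball_cover_covers _ (inv_pow2_pos (S n))) as Hcover.
  destruct (first_index_mem _ x (Hcover x)) as [s [Ds [Hs Hxs]]].
  destruct (first_index_mem _ y (Hcover y)) as [t [Dt [Ht Hyt]]].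
  fold (ball_code n x) (ball_code n y) in *.
  rewrite (f_inj s t Ds Dt ltac:(congruence)) in Hxs.
  eapply Rle_trans; [apply (Hultra x t y) |]. rewrite (dist_sym t y). now apply Rmax_lub.
Qed.

Lemma ball_code_eq_of_dist_le (n : nat) (x y : X) :
  d x y <= / 2 ^ S n -> ball_code n x = ball_code n y.
Proof.
  intro Hxy. apply first_index_ext. intro k.
  split; intros [s [Ds [Hs Hdist]]]; exists s; repeat split; try assumption.
  - eapply Rle_trans; [apply (Hultra y x s) |]. rewrite dist_sym. now apply Rmax_lub.
  - eapply Rle_trans; [apply (Hultra x y s) |]. now apply Rmax_lub.
Qed.

End DenseCodes.

End MetricSpace.

Theorem mainTheorem11 (X : Type) (d : X -> X -> R)
  (Hmet : is_metric d) (Hsep : separable d) (Hzd : zero_dimensional d)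
  (Hle1 : forall x y, d x y <= 1) :
  (exists (A : baire -> Prop) (h : {a : baire | A a} -> X) (g : X -> {a : baire | A a}),
      homeo_onto d A h g /\
      (forall x y, d (h x) (h y) <= baire_dist (proj1_sig x) (proj1_sig y)))
  /\
  (is_ultrametric d ->
    exists (A : baire -> Prop) (h : {a : baire | A a} -> X) (g : X -> {a : baire | A a}),
      homeo_onto d A h g /\
      (forall x y, d (h x) (h y) <= baire_dist (proj1_sig x) (proj1_sig y)) /\
      (forall u v, baire_dist (proj1_sig (g u)) (proj1_sig (g v)) <= 2 * d u v))
  /\
  (is_ultrametric d -> complete d ->
    exists (A : baire -> Prop) (h : {a : baire | A a} -> X) (g : X -> {a : baire | A a}),
      closed_in_baire A /\
      homeo_onto d A h g /\
      (forall x y, d (h x) (h y) <= baire_dist (proj1_sig x) (proj1_sig y)) /\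
      (forall u v, baire_dist (proj1_sig (g u)) (proj1_sig (g v)) <= 2 * d u v)).
Proof.
  destruct Hsep as [D [[f f_inj] D_dense]].
  pose proof (cell_code_fibre_small d Hmet Hzd D f f_inj D_dense) as cell_small.
  pose proof (cell_code_locally_constant d Hmet Hzd D f f_inj D_dense) as cell_loc.
  set (c := ball_code d D f).
  assert (ball_codes : is_ultrametric d ->
    (forall n x y, c n x = c n y -> d x y <= / 2 ^ S n) /\
    (forall n x y, d x y <= / 2 ^ S n -> c n x = c n y)).
  { intro Hultra. split;
      [exact (ball_code_fibre_small d Hmet D f f_inj D_dense Hultra)
      | exact (ball_code_eq_of_dist_le d Hmet D f Hultra)]. }
  assert (ultra_embedding : is_ultrametric d ->
    homeo_onto d (itinerary_range c) (decode c) (encode c) /\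
    (forall a b, d (decode c a) (decode c b) <= baire_dist (proj1_sig a) (proj1_sig b)) /\
    (forall u v, baire_dist (itinerary c u) (itinerary c v) <= 2 * d u v)).
  { intro Hultra. destruct (ball_codes Hultra) as [ball_small ball_eq].
    split; [| split].
    - exact (itinerary_homeo d Hmet Hle1 c ball_small
               (code_locally_constant_of_dist_le d c ball_eq)).
    - exact (decode_lipschitz d Hmet Hle1 c ball_small).
    - exact (baire_dist_itinerary_le d Hmet c ball_eq). }
  split; [| split].
  - exists (itinerary_range (cell_code d D f)), (decode _), (encode _).
    split; [apply itinerary_homeo | apply decode_lipschitz]; assumption.
  - intro Hultra. exists (itinerary_range c), (decode c), (encode c).
    exact (ultra_embedding Hultra).
  - intros Hultra Hcomplete. exists (itinerary_range c), (decode c), (encode c).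
    destruct (ball_codes Hultra) as [ball_small ball_eq].
    split; [exact (itinerary_range_closed d c ball_small ball_eq Hcomplete) |].
    exact (ultra_embedding Hultra).
Qed.
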